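(* Let $Q$ be a quantale, $M$ a shrinkable $Q$-module, $\mathcal{F}_1,\dots,\mathcal{F}_n\in\operatorname{mF}(Q)$ and $\mathcal{F}=\mathcal{F}_1\cap\cdots\cap\mathcal{F}_n$. Let $\varphi:M_\mathcal{F}\to\prod_{k=1}^nM_{\mathcal{F}_k}$ be the $Q$-premodule map $\overline x\mapsto(\overline x,\dots,\overline x)$. Then (a) $\varphi$ is injective; (b) if $\mathcal{F}_i+\mathcal{F}_j$ is 1-step over $M$ for all $1\le i<j\le n$, then for $x_1,\dots,x_n\in M$ we have $(\overline{x_1},\dots,\overline{x_n})\in\operatorname{im}\varphi$ if and only if for all $1\le i<j\le n$ the image of $\overline{x_i}$ under $M_{\mathcal{F}_i}\to M_{\mathcal{F}_i+\mathcal{F}_j}$ equals the image of $\overline{x_j}$ under $M_{\mathcal{F}_j}\to M_{\mathcal{F}_i+\mathcal{F}_j}$.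
   Context: A quantale is a poset $Q$ in which every nonempty subset has a join $\sum$ (binary join $a+b$; no bottom required), with top $1$ and a commutative associative multiplication with unit $1$ distributing over nonempty joins. A $Q$-module is a poset $M$ with all nonempty joins and an associative unital action $Q\times M\to M$ distributing over nonempty joins in each variable; a $Q$-premodule requires only binary joins and finite distributivity. A multiplicative filter (m-filter) is a subset $\mathcal{F}\subseteq Q$ containing $1$, upward closed and closed under multiplication; $\operatorname{mF}(Q)$ is the set of them; $\mathcal{F}+\mathcal{G}$ is the smallest m-filter containing $\mathcal{F}\cup\mathcal{G}$. For $x,x_i$ write $x\le^*\sum_{i\in I}x_i$ if $x\le\sum_{i\in I_0}x_i$ for a finite nonempty $I_0\subseteq I$. $M$ is shrinkable if whenever $x\le\sum_ix_i$ there is a family $(y_j)$ with $x=\sum_jy_j$ and $y_j\le^*\sum_ix_i$ for all $j$. Localization: $a\preceq^1_\mathcal{F}b$ means there are families $(a_i)$ in $M$, $(s_i)$ in $\mathcal{F}$ with $a\le\sum_ia_i$ and $s_ia_i\le b$; $a\preceq^n_\mathcal{F}b$ means a chain of $n$ such steps through elements of $M$; $a\preceq_\mathcal{F}b$ means $a\preceq^n_\mathcal{F}b$ for some $n\ge1$. $M_\mathcal{F}=M/\!\sim$ where $a\sim b$ iff $a\preceq_\mathcal{F}b$ and $b\preceq_\mathcal{F}a$, with classes $\overline a$ ordered by $\overline a\le\overline b\iff a\preceq_\mathcal{F}b$; it is a $Q$-premodule via $\overline a+\overline b=\overline{a+b}$, $q\overline a=\overline{qa}$. For $\mathcal{F}\subseteq\mathcal{G}$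 the map $M_\mathcal{F}\to M_\mathcal{G}$, $\overline a\mapsto\overline a$, is a well-defined premodule map. $\mathcal{F}$ is localizable over $M$ if for each $b$ there is $n_b$ with $a\preceq_\mathcal{F}b\Rightarrow a\preceq^{n_b}_\mathcal{F}b$; $\mathcal{F}$ is 1-step over $M$ if it is localizable and $a\preceq_\mathcal{F}b$ implies $a\preceq^1_\mathcal{F}b$. *)

From Stdlib Require Import List IndefiniteDescription.
From mathcomp Require Import all_boot.

Set Implicit Arguments.
Unset Strict Implicit.
Unset Printing Implicit Defensive.

(* [qsup S] is the join of S; its value on the empty set is irrelevant.    *)
Record quantale := Quantale {
  qcar :> Type;
  qle : qcar -> qcar -> Prop;
  qle_refl : forall x, qle x x;
  qle_trans : forall x y z, qle x y -> qle y z -> qle x z;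
  qle_antisym : forall x y, qle x y -> qle y x -> x = y;
  qsup : (qcar -> Prop) -> qcar;
  qsup_ub : forall (S : qcar -> Prop) x, S x -> qle x (qsup S);
  qsup_least : forall (S : qcar -> Prop) b, (exists x, S x) ->
      (forall x, S x -> qle x b) -> qle (qsup S) b;
  qone : qcar;
  qone_top : forall x, qle x qone;
  qmul : qcar -> qcar -> qcar;
  qmulC : forall a b, qmul a b = qmul b a;
  qmulA : forall a b c, qmul a (qmul b c) = qmul (qmul a b) c;
  qmul1 : forall a, qmul qone a = a;
  qmul_sup : forall a (S : qcar -> Prop), (exists x, S x) ->
      qmul a (qsup S) = qsup (fun y => exists s, S s /\ y = qmul a s)
}.

Record qmodule (Q : quantale) := QModule {
  mcar :> Type;
  mle : mcar -> mcar -> Prop;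
  mle_refl : forall x, mle x x;
  mle_trans : forall x y z, mle x y -> mle y z -> mle x z;
  mle_antisym : forall x y, mle x y -> mle y x -> x = y;
  msup : (mcar -> Prop) -> mcar;
  msup_ub : forall (S : mcar -> Prop) x, S x -> mle x (msup S);
  msup_least : forall (S : mcar -> Prop) b, (exists x, S x) ->
      (forall x, S x -> mle x b) -> mle (msup S) b;
  act : qcar Q -> mcar -> mcar;
  actA : forall p q x, act (qmul p q) x = act p (act q x);
  act1 : forall x, act (qone Q) x = x;
  act_supr : forall q (S : mcar -> Prop), (exists x, S x) ->
      act q (msup S) = msup (fun y => exists x, S x /\ y = act q x);
  act_supl : forall (T : qcar Q -> Prop) x, (exists q, T q) ->
      act (qsup T) x = msup (fun y => exists q, T q /\ y = act q x)
}.

Arguments qle {Q} : rename.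
Arguments qsup {Q} : rename.
Arguments qone {Q} : rename.
Arguments qmul {Q} : rename.
Arguments mle {Q M} : rename.
Arguments msup {Q M} : rename.
Arguments act {Q M} : rename.

Section Loc.
Variable Q : quantale.
Variable M : qmodule Q.

Definition msupF (I : Type) (f : I -> M) : M := msup (fun y => exists i, y = f i).

Definition le_star (x : M) (I : Type) (xs : I -> M) : Prop :=
  exists l : list I, l <> nil /\
    mle x (msup (fun y => exists i, In i l /\ y = xs i)).

Definition shrinkable : Prop :=
  forall (x : M) (I : Type) (xs : I -> M), inhabited I ->
    mle x (msupF xs) ->
    exists (J : Type) (ys : J -> M), inhabited J /\ x = msupF ys /\
      forall j, le_star (ys j) xs.

Definition mfilter (F : Q -> Prop) : Prop :=
  F qone /\ (forall a b, F a -> qle a b -> F b) /\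
  (forall a b, F a -> F b -> F (qmul a b)).

Definition fplus (F G : Q -> Prop) : Q -> Prop :=
  fun q => forall H : Q -> Prop, mfilter H ->
    (forall x, F x -> H x) -> (forall x, G x -> H x) -> H q.

Definition fcap (n : nat) (Fs : 'I_n -> Q -> Prop) : Q -> Prop :=
  fun q => forall k, Fs k q.

Definition pre1 (F : Q -> Prop) (a b : M) : Prop :=
  exists (I : Type) (ai : I -> M) (si : I -> Q), inhabited I /\
    mle a (msupF ai) /\ (forall i, F (si i)) /\ (forall i, mle (act (si i) (ai i)) b).

(* a <=^n_F b : chain of n steps (n >= 1 is the meaningful case). *)
Fixpoint pren (F : Q -> Prop) (n : nat) : M -> M -> Prop :=
  match n with
  | 0 => fun a b => a = b
  | S m => fun a b => exists c, pre1 F a c /\ pren F m c b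
  end.

Definition preF (F : Q -> Prop) (a b : M) : Prop :=
  exists n, (0 < n)%N /\ pren F n a b.

Definition equivF (F : Q -> Prop) (a b : M) : Prop := preF F a b /\ preF F b a.

Definition localizable (F : Q -> Prop) : Prop :=
  forall b, exists nb, forall a, preF F a b -> pren F nb a b.

Definition one_step (F : Q -> Prop) : Prop :=
  localizable F /\ forall a b, preF F a b -> pre1 F a b.

(* The localization M_F = M / ~, as the type of equivalence classes. *)
Definition Mloc (F : Q -> Prop) : Type :=
  { P : M -> Prop | exists a, P = equivF F a }.

Definition cls (F : Q -> Prop) (a : M) : Mloc F :=
  exist _ (equivF F a) (ex_intro _ a erefl).

Definition rep (F : Q -> Prop) (c : Mloc F) : M :=
  proj1_sig (constructive_indefinite_description _ (proj2_sig c)).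

(* The canonical map M_F -> M_G, cls a |-> cls a (for F ⊆ G). *)
Definition locmap (F G : Q -> Prop) (c : Mloc F) : Mloc G := cls G (rep c).

Definition phi (n : nat) (Fs : 'I_n -> Q -> Prop) (c : Mloc (fcap Fs)) :
  forall k : 'I_n, Mloc (Fs k) := fun k => locmap (Fs k) c.

End Loc.

Arguments msupF {Q M I}.
Arguments shrinkable {Q}.
Arguments mfilter {Q}.
Arguments fplus {Q}.
Arguments fcap {Q n}.
Arguments one_step {Q}.
Arguments Mloc {Q}.
Arguments cls {Q M}.
Arguments locmap {Q M}.
Arguments phi {Q M n}.

(* Injectivity reduces to: if x ≼_F b and x ≼_G b then x ≼_{F∩G} b.  Given x ≼^1_F c and
   x ≼^1_G d, shrinkability covers x by elements v with s v <= c and t v <= d for some s in F,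
   t in G; then v ≼^1_{F∩G} s v + t v because s + t lies in F ∩ G, and s v, t v start
   shorter chains, so induction on the two chain lengths concludes.
   For the gluing, one-stepness turns the compatibility of x_i and x_j into a single step
   x_i ≼^1 x_j for the filter of products f g (f in F_i, g in F_j).  The glued element is the
   join of all w with w ≼^1_{F_j} x_j for every j; shrinking x_k once per index shows that
   x_k is covered by elements which a single s in F_k moves into that set. *)

From Stdlib Require Import List ProofIrrelevance FunctionalExtensionality.
From Stdlib Require Import PropExtensionality IndefiniteDescription.
From mathcomp Require Import all_boot.

Set Implicit Arguments.
Unset Strict Implicit.
Unset Printing Implicit Defensive.

Section Localization.

Variable Q : quantale.
Implicit Types (a f g p q s t u : Q) (F G H : Q -> Prop).

Definition qjoin a b : Q := qsup (fun y => y = a \/ y = b).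

Lemma qle_joinl a b : qle a (qjoin a b).
Proof. by apply: qsup_ub; left. Qed.

Lemma qle_joinr a b : qle b (qjoin a b).
Proof. by apply: qsup_ub; right. Qed.

Lemma qjoin_idr a b : qle a b -> qjoin a b = b.
Proof.
move=> ab; apply: qle_antisym; last exact: qle_joinr.
apply: qsup_least; first by exists a; left.
by move=> _ [->|->] //; apply: qle_refl.
Qed.

Lemma qle_mul2l a b p : qle a b -> qle (qmul p a) (qmul p b).
Proof.
move=> ab; rewrite -(qjoin_idr ab) /qjoin qmul_sup; last by exists a; left.
by apply: qsup_ub; exists a; split=> //; left.
Qed.

Lemma qle_mul2r a b p : qle a b -> qle (qmul a p) (qmul b p).
Proof. by move=> ab; rewrite ![qmul _ p]qmulC; apply: qle_mul2l. Qed.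

Lemma qmul_lel a b : qle (qmul a b) a.
Proof. by have := qle_mul2l a (qone_top b); rewrite (qmulC a qone) qmul1. Qed.

Lemma qmul_ler a b : qle (qmul a b) b.
Proof. by rewrite qmulC; apply: qmul_lel. Qed.

Lemma mfilter1 F : mfilter F -> F qone.
Proof. by case. Qed.

Lemma mfilterS F a b : mfilter F -> F a -> qle a b -> F b.
Proof. by case=> _ [+ _]; apply. Qed.

Lemma mfilterM F a b : mfilter F -> F a -> F b -> F (qmul a b).
Proof. by case=> _ [_ +]; apply. Qed.

Lemma mfilter_cap (I : Type) (P : I -> Prop) (Fs : I -> Q -> Prop) :
  (forall i, mfilter (Fs i)) -> mfilter (fun q => forall i, P i -> Fs i q).
Proof.
move=> Fs_filter; split; first by move=> i _; apply: mfilter1.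
split; first by move=> a b Fa ab i Pi; apply: mfilterS (Fa i Pi) ab.
by move=> a b Fa Fb i Pi; apply: mfilterM (Fa i Pi) (Fb i Pi).
Qed.

Definition fmul F G : Q -> Prop := fun u => exists f g, F f /\ G g /\ qle (qmul f g) u.

Lemma fmul_mfilter F G : mfilter F -> mfilter G -> mfilter (fmul F G).
Proof.
move=> Ffilter Gfilter; split.
  by exists qone, qone; do 2?split; [exact: mfilter1 | exact: mfilter1 | exact: qone_top].
split=> [a b [f [g [Ff [Gg fga]]]] ab|a b [f [g [Ff [Gg fga]]]] [f' [g' [Ff' [Gg' fgb]]]]].
  by exists f, g; do 2!split=> //; apply: qle_trans fga ab.
exists (qmul f f'), (qmul g g'); split; first exact: mfilterM.
split; first exact: mfilterM.
have -> : qmul (qmul f f') (qmul g g') = qmul (qmul f g) (qmul f' g').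
  by rewrite -!qmulA; congr qmul; rewrite !qmulA (qmulC f' g).
exact: qle_trans (qle_mul2r _ fga) (qle_mul2l _ fgb).
Qed.

Lemma fmulC F G u : fmul F G u -> fmul G F u.
Proof. by move=> [f [g [Ff [Gg fgu]]]]; exists g, f; rewrite qmulC. Qed.

Lemma fplus_subl F G u : F u -> fplus F G u.
Proof. by move=> Fu H _ + _; apply. Qed.

Lemma fplus_subr F G u : G u -> fplus F G u.
Proof. by move=> Gu H _ _; apply. Qed.

Lemma fplus_sub_fmul F G u : mfilter F -> mfilter G -> fplus F G u -> fmul F G u.
Proof.
move=> Ffilter Gfilter; apply; first exact: fmul_mfilter.
  move=> f Ff; exists f, qone; do 2?split=> //; first exact: mfilter1.
  by rewrite qmulC qmul1; apply: qle_refl.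
move=> g Gg; exists qone, g; do 2?split=> //; first exact: mfilter1.
by rewrite qmul1; apply: qle_refl.
Qed.

Variable M : qmodule Q.
Implicit Types (x y z v w b c d : M) (A B S T : M -> Prop).

Definition mjoin x y : M := msup (fun z => z = x \/ z = y).

Lemma mle_joinl x y : mle x (mjoin x y).
Proof. by apply: msup_ub; left. Qed.

Lemma mle_joinr x y : mle y (mjoin x y).
Proof. by apply: msup_ub; right. Qed.

Lemma mjoin_idr x y : mle x y -> mjoin x y = y.
Proof.
move=> xy; apply: mle_antisym; last exact: mle_joinr.
apply: msup_least; first by exists x; left.
by move=> _ [->|->] //; apply: mle_refl.
Qed.

Lemma msup_le S T :
  (exists x, S x) -> (forall x, S x -> exists y, T y /\ mle x y) -> mle (msup S) (msup T).
Proof.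
move=> S_ne ST; apply: msup_least => // x /ST [y [Ty xy]].
by apply: mle_trans xy _; apply: msup_ub.
Qed.

Lemma act_mono_r q x y : mle x y -> mle (act q x) (act q y).
Proof.
move=> xy; rewrite -(mjoin_idr xy) /mjoin act_supr; last by exists x; left.
by apply: msup_ub; exists x; split=> //; left.
Qed.

Lemma act_mono_l p q x : qle p q -> mle (act p x) (act q x).
Proof.
move=> pq; rewrite -(qjoin_idr pq) /qjoin act_supl; last by exists p; left.
by apply: msup_ub; exists p; split=> //; left.
Qed.

Lemma act_le q x : mle (act q x) x.
Proof. by rewrite -{2}(act1 x); apply: act_mono_l; apply: qone_top. Qed.

Lemma act_comm p q x : act p (act q x) = act q (act p x).
Proof. by rewrite -!actA qmulC. Qed.

Lemma act_qjoin s t x : mle (act (qjoin s t) x) (mjoin (act s x) (act t x)).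
Proof.
rewrite /qjoin act_supl; last by exists s; left.
apply: msup_least; first by exists (act s x), s; split=> //; left.
by move=> _ [_ [[->|->] ->]]; [apply: mle_joinl | apply: mle_joinr].
Qed.

Definition fbelow H c : M -> Prop := fun w => exists s, H s /\ mle (act s w) c.

Lemma fbelow_monoL H c v w : mle v w -> fbelow H c w -> fbelow H c v.
Proof. by move=> vw [s [Hs swc]]; exists s; split=> //; apply: mle_trans (act_mono_r s vw) swc. Qed.

Lemma fbelow_monoR H c c' w : mle c c' -> fbelow H c w -> fbelow H c' w.
Proof. by move=> cc' [s [Hs swc]]; exists s; split=> //; apply: mle_trans swc cc'. Qed.

Lemma pre1P H x c :
  pre1 H x c <-> (exists w, fbelow H c w) /\ mle x (msup (fbelow H c)).
Proof.
split=> [[I [ai [si [[i0] [x_le [Hs s_le]]]]]]|[[w0 w0_below] x_le]].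
  split; first by exists (ai i0), (si i0).
  apply: mle_trans x_le (msup_le _ _); first by exists (ai i0), i0.
  by move=> _ [i ->]; exists (ai i); split; [exists (si i) | apply: mle_refl].
pose scalar (w : {w | fbelow H c w}) :=
  proj1_sig (constructive_indefinite_description _ (proj2_sig w)).
exists {w | fbelow H c w}, (@proj1_sig _ _), scalar.
split; first exact: inhabits (exist _ w0 w0_below).
split.
  apply: mle_trans x_le (msup_le _ _); first by exists w0.
  by move=> w w_below; exists w; split; [exists (exist _ w w_below) | apply: mle_refl].
by split=> w; rewrite /scalar; case: constructive_indefinite_description => s [].
Qed.

Lemma pre1_le H x y : H qone -> mle x y -> pre1 H x y.
Proof.
move=> H1 xy; have x_below : fbelow H y x by exists qone; rewrite act1.
by apply/pre1P; split; [exists x | apply: msup_ub].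
Qed.

Lemma pre1_monoL H x x' c : mle x x' -> pre1 H x' c -> pre1 H x c.
Proof. by move=> xx' /pre1P [c_ne x'_le]; apply/pre1P; split=> //; apply: mle_trans x'_le. Qed.

Lemma pre1_monoR H x c c' : mle c c' -> pre1 H x c -> pre1 H x c'.
Proof.
move=> cc' /pre1P [[w0 w0_below] x_le]; apply/pre1P; split.
  by exists w0; apply: fbelow_monoR w0_below.
apply: mle_trans x_le (msup_le _ _); first by exists w0.
by move=> w w_below; exists w; split; [apply: fbelow_monoR w_below | apply: mle_refl].
Qed.

Lemma pre1_monoF H H' x c : (forall q, H q -> H' q) -> pre1 H x c -> pre1 H' x c.
Proof.
move=> HH' [I [ai [si [I_ne [x_le [Hs s_le]]]]]].
by exists I, ai, si; do 3!split=> //; move=> i; apply: HH'.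
Qed.

Lemma pre1_act H q x c : pre1 H x c -> pre1 H (act q x) (act q c).
Proof.
have act_below w : fbelow H c w -> fbelow H (act q c) (act q w).
  by move=> [s [Hs swc]]; exists s; split=> //; rewrite act_comm; apply: act_mono_r.
move=> /pre1P [[w0 w0_below] x_le]; apply/pre1P; split; first by exists (act q w0); apply: act_below.
apply: mle_trans (act_mono_r q x_le) _; rewrite act_supr; last by exists w0.
apply: msup_le; first by exists (act q w0), w0.
by move=> _ [w [w_below ->]]; exists (act q w); split; [apply: act_below | apply: mle_refl].
Qed.

Lemma pre1_join H S c : (exists y, S y) -> (forall y, S y -> pre1 H y c) -> pre1 H (msup S) c.
Proof.
move=> [y0 S_y0] S_pre1; apply/pre1P; split; first by have /pre1P [] := S_pre1 y0 S_y0.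
by apply: msup_least => [|y /S_pre1 /pre1P []]; first by exists y0.
Qed.

Definition covered A y : Prop :=
  (exists w, mle w y /\ A w) /\ mle y (msup (fun w => mle w y /\ A w)).

Lemma covered_self A y : A y -> covered A y.
Proof.
move=> Ay; split; first by exists y; split=> //; apply: mle_refl.
by apply: msup_ub; split=> //; apply: mle_refl.
Qed.

Lemma covered_bind A B y :
  covered A y -> (forall w, mle w y -> A w -> covered B w) -> covered B y.
Proof.
move=> [[w0 [w0y A_w0]] y_le] AB.
have [[v0 [v0w0 B_v0]] _] := AB w0 w0y A_w0.
split; first by exists v0; split=> //; apply: mle_trans v0w0 w0y.
apply: mle_trans y_le _; apply: msup_least => [|w [wy Aw]]; first by exists w0.
have [[v [vw Bv]] w_le] := AB w wy Aw.
apply: mle_trans w_le (msup_le _ _); first by exists v.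
by move=> u [uw Bu]; exists u; split; [split=> //; apply: mle_trans uw wy | apply: mle_refl].
Qed.

Lemma covered_mono A B y : covered A y -> (forall w, mle w y -> A w -> B w) -> covered B y.
Proof. by move=> Ay AB; apply: covered_bind Ay _ => w wy Aw; apply/covered_self/AB. Qed.

Lemma covered_pre1 H y c : covered (fbelow H c) y -> pre1 H y c.
Proof.
move=> [[w [wy w_below]] y_le]; apply/pre1P; split; first by exists w.
apply: mle_trans y_le (msup_le _ _); first by exists w.
by move=> v [_ v_below]; exists v; split=> //; apply: mle_refl.
Qed.

(* The product of the finitely many s_i involved lies in H and below each of them. *)
Lemma le_star_fbelow H (I : Type) (ai : I -> M) (si : I -> Q) c y :
  mfilter H -> (forall i, H (si i)) -> (forall i, mle (act (si i) (ai i)) c) ->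
  le_star y ai -> fbelow H c y.
Proof.
move=> Hfilter Hs s_le [l [l_ne y_le]].
have [s [H_s s_le_si]] : exists s, H s /\ forall i, In i l -> qle s (si i).
  elim: l {l_ne y_le} => [|i l [s [H_s s_le_si]]]; first by exists qone; split=> //; exact: mfilter1.
  exists (qmul (si i) s); split; first exact: mfilterM.
  by move=> j /= [<-|jl]; [apply: qmul_lel | apply: qle_trans (qmul_ler _ _) (s_le_si j jl)].
have [i0 i0l] : exists i, In i l by case: l l_ne {y_le s_le_si} => [|i l] // _; exists i; left.
exists s; split=> //; apply: mle_trans (act_mono_r s y_le) _.
rewrite act_supr; last by exists (ai i0), i0.
apply: msup_least; first by exists (act s (ai i0)), (ai i0); split=> //; exists i0.
move=> _ [_ [[i [il ->]] ->]].
by apply: mle_trans (s_le i); apply: act_mono_l; apply: s_le_si.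
Qed.

Hypothesis shrM : shrinkable M.

Lemma pre1_covered H x c : mfilter H -> pre1 H x c -> covered (fbelow H c) x.
Proof.
move=> Hfilter [I [ai [si [I_ne [x_le [Hs s_le]]]]]].
have [J [ys [[j0] [x_eq ys_le]]]] := shrM I_ne x_le.
have ys_below j : fbelow H c (ys j) := le_star_fbelow Hfilter Hs s_le (ys_le j).
have ys_le_x j : mle (ys j) x by rewrite x_eq; apply: msup_ub; exists j.
split; first by exists (ys j0).
rewrite {1}x_eq; apply: msup_least => [|_ [j ->]]; first by exists (ys j0), j0.
by apply: msup_ub.
Qed.

(* Unlike [pren], a chain may stop anywhere below [b]; this makes it antitone in [x]. *)
Fixpoint chain_le H (k : nat) x b : Prop :=
  if k is k'.+1 then exists c, pre1 H x c /\ chain_le H k' c b else mle x b.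

Lemma chain_monoL H k x x' b : mle x x' -> chain_le H k x' b -> chain_le H k x b.
Proof.
case: k => [|k] /= xx'; first exact: mle_trans.
by move=> [c [x'c cb]]; exists c; split=> //; apply: pre1_monoL x'c.
Qed.

Lemma chain_monoR H k x b b' : mle b b' -> chain_le H k x b -> chain_le H k x b'.
Proof.
move=> bb'; elim: k x => [|k IH] x /=; first by move=> xb; apply: mle_trans xb bb'.
by move=> [c [xc cb]]; exists c; split=> //; apply: IH.
Qed.

Lemma chain_act H q k x b : chain_le H k x b -> chain_le H k (act q x) (act q b).
Proof.
elim: k x => [|k IH] x /=; first exact: act_mono_r.
by move=> [c [xc cb]]; exists (act q c); split; [apply: pre1_act | apply: IH].
Qed.

Lemma chain_of_le H k x b : H qone -> mle x b -> chain_le H k x b.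
Proof.
move=> H1; elim: k x => [|k IH] x //= xb.
by exists x; split; [apply: pre1_le (mle_refl _) | apply: IH].
Qed.

Lemma chain_join H k S b :
  (exists y, S y) -> (forall y, S y -> chain_le H k y b) -> chain_le H k (msup S) b.
Proof.
elim: k S => [|k IH] S S_ne S_chain /=; first exact: msup_least.
pose T c := (exists y, S y /\ pre1 H y c) /\ chain_le H k c b.
have [y0 S_y0] := S_ne; have [c0 [y0c0 c0b]] := S_chain y0 S_y0.
exists (msup T); split; last first.
  by apply: IH => [|c [] //]; exists c0; split=> //; exists y0.
apply: pre1_join => [|y S_y]; first by exists y0.
have [c [yc cb]] := S_chain y S_y.
have c_le : mle c (msup T) by apply: msup_ub; split=> //; exists y.
exact: pre1_monoR c_le yc.
Qed.

Lemma chain_covered H k A y b :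
  covered A y -> (forall w, mle w y -> A w -> chain_le H k w b) -> chain_le H k y b.
Proof.
move=> [[w0 [w0y A_w0]] y_le] A_chain; apply: chain_monoL y_le _.
by apply: chain_join => [|w [wy Aw]]; [exists w0 | apply: A_chain].
Qed.

Lemma preF_chain H x b : preF H x b -> exists k, chain_le H k x b.
Proof.
move=> [k [_ xb]]; exists k; elim: k x xb => [|k IH] x /=; first by move->; apply: mle_refl.
by move=> [c [xc cb]]; exists c; split=> //; apply: IH.
Qed.

Lemma chain_preF H k x b : H qone -> chain_le H k x b -> preF H x b.
Proof.
move=> H1 xb; exists k.+1; split=> //; elim: k x xb => [|k IH] x /=.
  by move=> xb; exists b; split=> //; apply: pre1_le.
by move=> [c [xc cb]]; exists c; split=> //; apply: IH.
Qed.

Lemma pre1_preF H x b : pre1 H x b -> preF H x b.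
Proof. by move=> xb; exists 1; split=> //; exists b. Qed.

Lemma preF_trans H x c b : preF H x c -> preF H c b -> preF H x b.
Proof.
move=> [n [n_gt0 xc]] [m [_ cb]]; exists (n + m); split; first by rewrite addn_gt0 n_gt0.
elim: n x {n_gt0} xc => [|n IH] x /=; first by move->.
by move=> [d [xd dc]]; exists d; split=> //; apply: IH.
Qed.

Lemma preF_monoF H H' x b : (forall q, H q -> H' q) -> preF H x b -> preF H' x b.
Proof.
move=> HH' [n [n_gt0 xb]]; exists n; split=> //.
elim: n x {n_gt0} xb => [|n IH] x //= [c [xc cb]].
by exists c; split; [apply: pre1_monoF xc | apply: IH].
Qed.

Lemma equivF_refl H x : H qone -> equivF H x x.
Proof. by move=> H1; split; apply/pre1_preF/pre1_le/mle_refl. Qed.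

Lemma equivF_sym H x y : equivF H x y -> equivF H y x.
Proof. by case. Qed.

Lemma equivF_trans H x y z : equivF H x y -> equivF H y z -> equivF H x z.
Proof. by move=> [xy yx] [yz zy]; split; [apply: preF_trans xy yz | apply: preF_trans zy yx]. Qed.

Lemma equivF_monoF H H' x y : (forall q, H q -> H' q) -> equivF H x y -> equivF H' x y.
Proof. by move=> HH' [xy yx]; split; apply: preF_monoF HH' _. Qed.

Lemma covered_fbelow2 F G x c d : mfilter F -> mfilter G -> pre1 F x c -> pre1 G x d ->
  covered (fun v => fbelow F c v /\ fbelow G d v) x.
Proof.
move=> Ffilter Gfilter xc xd.
apply: covered_bind (pre1_covered Ffilter xc) _ => w wx w_below.
apply: covered_mono (pre1_covered Gfilter (pre1_monoL wx xd)) _ => v vw v_below.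
by split=> //; apply: fbelow_monoL vw w_below.
Qed.

(* The step that makes intersections work: (s + t) v = s v + t v and s + t is in F ∩ G. *)
Lemma pre1_capI F G s t v : mfilter F -> mfilter G -> F s -> G t ->
  pre1 (fun q => F q /\ G q) v (mjoin (act s v) (act t v)).
Proof.
move=> Ffilter Gfilter Fs Gt; apply/covered_pre1/covered_self.
exists (qjoin s t); split; last exact: act_qjoin.
by split; [apply: mfilterS Fs (qle_joinl _ _) | apply: mfilterS Gt (qle_joinr _ _)].
Qed.

Lemma chain_capI F G n m x b : mfilter F -> mfilter G ->
  chain_le F n x b -> chain_le G m x b -> chain_le (fun q => F q /\ G q) (n + m) x b.
Proof.
move=> Ffilter Gfilter; have FG1 : F qone /\ G qone by split; apply: mfilter1.
elim: n m x => [|n IHn] m x; first by move=> xb _; apply: chain_of_le.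
elim: m x => [|m IHm] x xF xG; first exact: chain_of_le.
have [c [xc cb]] := xF; have [d [xd db]] := xG.
apply: chain_covered (covered_fbelow2 Ffilter Gfilter xc xd) _.
move=> v vx [[s [Fs svc]] [t [Gt tvd]]]; rewrite addSn /=.
exists (mjoin (act s v) (act t v)); split; first exact: pre1_capI.
apply: chain_join => [|_ [->|->]]; first by exists (act s v); left.
  apply: IHn; first exact: chain_monoL svc cb.
  exact: chain_monoR (act_le s b) (chain_monoL (act_mono_r s vx) (chain_act s xG)).
rewrite addnS -addSn; apply: IHm; last exact: chain_monoL tvd db.
exact: chain_monoR (act_le t b) (chain_monoL (act_mono_r t vx) (chain_act t xF)).
Qed.

Lemma preF_capI F G x b : mfilter F -> mfilter G ->
  preF F x b -> preF G x b -> preF (fun q => F q /\ G q) x b.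
Proof.
move=> Ffilter Gfilter /preF_chain [n xF] /preF_chain [m xG].
by apply: (@chain_preF _ (n + m)); [split; apply: mfilter1 | apply: chain_capI].
Qed.

Lemma preF_bigcap (I : finType) (Fs : I -> Q -> Prop) (i0 : I) x b :
  (forall i, mfilter (Fs i)) -> (forall i, preF (Fs i) x b) ->
  preF (fun q => forall i, Fs i q) x b.
Proof.
move=> Fs_filter xb.
suff : preF (fun q => forall i, i \in i0 :: enum I -> Fs i q) x b.
  by apply: preF_monoF => q Fq i; apply: Fq; rewrite inE mem_enum orbT.
elim: (enum I) => [|j L IH].
  by apply: preF_monoF (xb i0) => q Fq i; rewrite inE => /eqP ->.
have := preF_capI (Fs_filter j) (mfilter_cap (fun i => i \in i0 :: L) Fs_filter) (xb j) IH.
apply: preF_monoF => q [Fj FL] i; rewrite !inE => /or3P [/eqP ->|/eqP ->|iL] //.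
  by apply: FL; rewrite inE eqxx.
by apply: FL; rewrite inE iL orbT.
Qed.

Lemma glue_cover (I : eqType) (Fs : I -> Q -> Prop) (xs : I -> M) k (L : seq I) y :
  (forall i, mfilter (Fs i)) -> (forall j, pre1 (fmul (Fs k) (Fs j)) (xs k) (xs j)) ->
  mle y (xs k) ->
  covered (fun w => exists s, Fs k s /\ forall j, j \in L -> pre1 (Fs j) (act s w) (xs j)) y.
Proof.
move=> Fs_filter xs_pre1 yk; elim: L => [|j L IH].
  by apply: covered_self; exists qone; split=> //; apply: mfilter1.
apply: covered_bind IH _ => w wy [s [Fk_s s_pre1]].
have := pre1_monoL (mle_trans wy yk) (xs_pre1 j).
move=> /(pre1_covered (fmul_mfilter (Fs_filter k) (Fs_filter j))) w_cover.
apply: covered_mono w_cover _ => v vw [u [[f [g [Fk_f [Fj_g fgu]]]] uv]].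
exists (qmul s f); split; first exact: mfilterM.
move=> i; rewrite inE => /orP [/eqP ->|iL].
  apply/covered_pre1/covered_self; exists g; split=> //.
  rewrite -actA; apply: mle_trans uv; apply: act_mono_l.
  by apply: qle_trans (qle_mul2l g (qmul_ler s f)) _; rewrite qmulC.
apply: pre1_monoL (s_pre1 i iL); rewrite actA; apply: act_mono_r.
exact: mle_trans (act_le f v) vw.
Qed.

Lemma glue (I : finType) (Fs : I -> Q -> Prop) (xs : I -> M) (i0 : I) :
  (forall i, mfilter (Fs i)) -> (forall i j, pre1 (fmul (Fs i) (Fs j)) (xs i) (xs j)) ->
  exists x, forall k, equivF (Fs k) x (xs k).
Proof.
move=> Fs_filter xs_pre1.
pose good w := forall j, pre1 (Fs j) w (xs j).
have cover k : covered (fun w => exists s, Fs k s /\ good (act s w)) (xs k).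
  apply: covered_mono (glue_cover (enum I) Fs_filter (xs_pre1 k) (mle_refl _)) _.
  by move=> w _ [s [Fk_s s_good]]; exists s; split=> // j; apply: s_good; rewrite mem_enum.
have [[w [_ [s [_ good_sw]]]] _] := cover i0.
exists (msup good) => k; split; apply: pre1_preF.
  by apply: pre1_join => [|w' good_w']; [exists (act s w) | apply: good_w'].
apply/covered_pre1/(covered_mono (cover k)) => w' _ [s' [Fk_s' good_sw']].
by exists s'; split=> //; apply: msup_ub.
Qed.

End Localization.

Section LocalizedModules.

Variables (Q : quantale) (M : qmodule Q).
Implicit Types (F G H : Q -> Prop) (x y : M).

Lemma one_step_fmul F G x y : one_step M (fplus F G) -> mfilter F -> mfilter G ->
  preF (fplus F G) x y -> pre1 (fmul F G) x y.
Proof. by move=> [_ os] Ffilter Gfilter /os; apply: pre1_monoF => q; apply: fplus_sub_fmul. Qed.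

Lemma pre1_fmul_pairwise n (Fs : 'I_n -> Q -> Prop) (xs : 'I_n -> M) :
  (forall k, mfilter (Fs k)) ->
  (forall i j : 'I_n, (i < j)%N -> one_step M (fplus (Fs i) (Fs j))) ->
  (forall i j : 'I_n, (i < j)%N -> equivF (fplus (Fs i) (Fs j)) (xs i) (xs j)) ->
  forall i j, pre1 (fmul (Fs i) (Fs j)) (xs i) (xs j).
Proof.
move=> Fs_filter os xs_equiv i j; case: (ltngtP i j) => [ij|ji|/val_inj ->].
- exact: one_step_fmul (os i j ij) (Fs_filter i) (Fs_filter j) (xs_equiv i j ij).1.
- have := one_step_fmul (os j i ji) (Fs_filter j) (Fs_filter i) (xs_equiv j i ji).2.
  by apply: pre1_monoF => q; apply: fmulC.
- exact: pre1_le (mfilter1 (fmul_mfilter (Fs_filter j) (Fs_filter j))) (mle_refl _).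
Qed.

Lemma cls_eqP H x y : H qone -> cls H x = cls H y <-> equivF H x y.
Proof.
move=> H1; split=> [e|xy].
  by have /= -> := congr1 (@proj1_sig _ _) e; apply: equivF_refl.
apply: eq_sig_hprop => [? ? ?|/=]; first exact: proof_irrelevance.
apply: functional_extensionality => z; apply: propositional_extensionality.
by split; apply: equivF_trans; [apply: equivF_sym|].
Qed.

Lemma cls_rep H (c : Mloc M H) : cls H (rep c) = c.
Proof.
apply: eq_sig_hprop => [? ? ?|/=]; first exact: proof_irrelevance.
by rewrite /rep; case: constructive_indefinite_description.
Qed.

Lemma cls_surj H (c : Mloc M H) : exists x, c = cls H x.
Proof. by exists (rep c); rewrite cls_rep. Qed.

Lemma locmap_cls F G x : F qone -> (forall q, F q -> G q) -> locmap F G (cls F x) = cls G x.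
Proof.
move=> F1 FG; apply/cls_eqP; first exact: FG.
by apply: equivF_monoF FG _; apply/(cls_eqP _ _ F1); rewrite cls_rep.
Qed.

Lemma locmap_fplus_eqP F G x y : F qone -> G qone ->
  locmap F (fplus F G) (cls F x) = locmap G (fplus F G) (cls G y) <->
  equivF (fplus F G) x y.
Proof.
move=> F1 G1; rewrite (locmap_cls _ F1 (@fplus_subl _ F G)) (locmap_cls _ G1 (@fplus_subr _ F G)).
exact: cls_eqP x y (fplus_subl F1).
Qed.

Lemma phi_cls n (Fs : 'I_n -> Q -> Prop) x : (forall k, Fs k qone) ->
  phi Fs (cls (fcap Fs) x) = fun k => cls (Fs k) x.
Proof.
move=> Fs1; apply: functional_extensionality_dep => k.
by apply: locmap_cls => // q; apply.
Qed.

Lemma phi_cls_eqP n (Fs : 'I_n -> Q -> Prop) x (ys : 'I_n -> M) : (forall k, Fs k qone) ->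
  phi Fs (cls (fcap Fs) x) = (fun k => cls (Fs k) (ys k)) <-> forall k, equivF (Fs k) x (ys k).
Proof.
move=> Fs1; rewrite phi_cls //; split=> [e k|xys].
  by apply/(cls_eqP _ _ (Fs1 k)); apply: (congr1 (fun f => f k) e).
by apply: functional_extensionality_dep => k; apply/cls_eqP.
Qed.

End LocalizedModules.

Theorem mainTheorem5 (Q : quantale) (M : qmodule Q) (n : nat)
  (Fs : 'I_n -> Q -> Prop) :
  shrinkable M -> (0 < n)%N -> (forall k, mfilter (Fs k)) ->
  injective (@phi Q M n Fs) /\
  ((forall i j : 'I_n, (i < j)%N -> one_step M (fplus (Fs i) (Fs j))) ->
   forall xs : 'I_n -> M,
     (exists c : Mloc M (fcap Fs), phi Fs c = (fun k => cls (Fs k) (xs k))) <->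
     (forall i j : 'I_n, (i < j)%N ->
        locmap (Fs i) (fplus (Fs i) (Fs j)) (cls (Fs i) (xs i)) =
        locmap (Fs j) (fplus (Fs i) (Fs j)) (cls (Fs j) (xs j)))).
Proof.
move=> shrM n_gt0 Fs_filter; have Fs1 k : Fs k qone := mfilter1 (Fs_filter k).
split.
  move=> /cls_surj [x ->] /cls_surj [x' ->].
  rewrite [RHS]phi_cls // => /(phi_cls_eqP _ _ Fs1) xx'.
  apply/cls_eqP => //; split; apply: (preF_bigcap shrM (Ordinal n_gt0)) => // k; by case: (xx' k).
move=> os xs; split.
  move=> [c]; have [y ->] := cls_surj c; move=> /(phi_cls_eqP _ _ Fs1) y_xs i j _.
  apply/locmap_fplus_eqP => //; apply: equivF_trans (equivF_sym _) _.
    exact: equivF_monoF (@fplus_subl _ _ _) (y_xs i).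
  exact: equivF_monoF (@fplus_subr _ _ _) (y_xs j).
move=> xs_eq; have [x x_xs] : exists x, forall k, equivF (Fs k) x (xs k).
  apply: (glue shrM (Ordinal n_gt0) Fs_filter); apply: pre1_fmul_pairwise Fs_filter os _.
  by move=> i j ij; apply/locmap_fplus_eqP/xs_eq.
by exists (cls (fcap Fs) x); apply/phi_cls_eqP.
Qed.
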